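(* Fix $\lambda>0$ and let $\mathrm{SU}(2)\subset\mathrm{SO}(4)\times\{1\}$ act on $\Lambda^2_-S^4$ as the lift of its standard action (via $(x_1,\dots,x_4)\leftrightarrow(x_1+ix_2,x_3+ix_4)\in\mathbb C^2$, fixing $x_5$). Let $I\subset\mathbb R$ be an open interval and $c(t)=\big({}^t(x_1(t),0,0,0,x_5(t)),{}^t(a_1(t),a_2(t),a_3(t))\big)$ a smooth path with $x_1(t)>0$, $x_1^2+x_5^2=1$. Then $\varphi_\lambda$ vanishes on the tangent spaces of $\mathrm{SU}(2)\cdot c(I)$ if and only if, for $i=1,2,3$, $$4\dot a_i\,\frac{1-x_5}{1+x_5}-a_i\,\frac{d}{dt}\Big\{\log(\lambda+r^2)+8\log(1+x_5)\Big\}=0,$$ where $r^2=a_1^2+a_2^2+a_3^2$.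
   Context: Let $S^4=\{x={}^t(x_1,\dots,x_5)\in\mathbb R^5:|x|=1\}$ with the round metric and let $\pi:\Lambda^2_-S^4\to S^4$ be the rank-3 bundle of anti-self-dual 2-forms. On $S^4\setminus\{x_5=\pm1\}$ use the oriented orthonormal frame $e_1=\frac{1}{\sqrt{1-x_5^2}}{}^t(-x_2,x_1,-x_4,x_3,0)$, $e_2=\frac{1}{\sqrt{1-x_5^2}}{}^t(-x_3,x_4,x_1,-x_2,0)$, $e_3=\frac{1}{\sqrt{1-x_5^2}}{}^t(-x_4,-x_3,x_2,x_1,0)$, $e_4=\frac{1}{\sqrt{1-x_5^2}}{}^t(-x_1x_5,-x_2x_5,-x_3x_5,-x_4x_5,1-x_5^2)$ with dual coframe $e^1,\dots,e^4$, and set $\omega_1=e^{12}-e^{34}$, $\omega_2=e^{13}-e^{42}$, $\omega_3=e^{14}-e^{23}$ ($e^{ij}=e^i\wedge e^j$), a local frame of $\Lambda^2_-S^4$. The point $\sum_i a_i\omega_i|_x$ is written $(x,{}^t(a_1,a_2,a_3))$; $r^2=a_1^2+a_2^2+a_3^2$ is the squared fiber norm (globally defined). Write $\nabla\omega_i=\sum_j\gamma_{ij}\otimes\omega_j$ for the connection induced by the Levi-Civita connection and $b_i=da_i+\sum_j a_j\pi^*\gamma_{ji}$. For $\lambda>0$ the Bryant–Salamon 3-form is $\varphi_\lambda=2s_\lambda\sum_{i=1}^3 b_i\wedge\pi^*\omega_i+s_\lambda^{-3}b_1\wedge b_2\wedge b_3$ with $s_\lambda=(\lambda+r^2)^{1/4}$;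 it is a torsion-free $G_2$-structure. A 4-dimensional submanifold $L$ is coassociative iff $\varphi_\lambda|_{TL}=0$. $\mathrm{SO}(5)$ acts on $S^4$ linearly and on $\Lambda^2_-S^4$ by the induced action on 2-forms ($g\cdot\omega=(g^{-1})^*\omega$), preserving $\varphi_\lambda$. *)

From Stdlib Require Import Reals ClassicalEpsilon.
Open Scope R_scope.

(* Vectors of R^5 / R^3 / R^4 are functions nat -> R, read at indices 1..n
   (matching the paper's indexing); other indices are never used. *)
Definition vec := nat -> R.

(* The derivative of f at t (the unique l with derivable_pt_lim f t l,
   whenever f is differentiable at t). *)
Definition deriv (f : R -> R) (t : R) : R :=
  epsilon (inhabits 0) (fun l => derivable_pt_lim f t l).

(* open interval (lo, hi), None meaning -oo resp. +oo *)
Definition oint (lo hi : option R) (t : R) : Prop :=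
  match lo with Some l => l < t | None => True end /\
  match hi with Some h => t < h | None => True end.

Definition smooth_on (I : R -> Prop) (f : R -> R) : Prop :=
  exists D : nat -> R -> R, D O = f /\
    forall n t, I t -> derivable_pt_lim (D n) t (D (S n) t).

Definition dot5 (u v : vec) : R :=
  u 1%nat * v 1%nat + u 2%nat * v 2%nat + u 3%nat * v 3%nat
  + u 4%nat * v 4%nat + u 5%nat * v 5%nat.

(* The oriented orthonormal frame e_1..e_4 on S^4 \ {x5 = +-1}
   (the formula is used on the open set |x5| < 1 of R^5). *)
Definition frame (k : nat) (x : vec) : vec := fun m =>
  (match k, m with
   | 1%nat, 1%nat => - x 2%nat | 1%nat, 2%nat => x 1%nat | 1%nat, 3%nat => - x 4%nat | 1%nat, 4%nat => x 3%nat
   | 2%nat, 1%nat => - x 3%nat | 2%nat, 2%nat => x 4%nat | 2%nat, 3%nat => x 1%nat | 2%nat, 4%nat => - x 2%nat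
   | 3%nat, 1%nat => - x 4%nat | 3%nat, 2%nat => - x 3%nat | 3%nat, 3%nat => x 2%nat | 3%nat, 4%nat => x 1%nat
   | 4%nat, 1%nat => - (x 1%nat * x 5%nat) | 4%nat, 2%nat => - (x 2%nat * x 5%nat)
   | 4%nat, 3%nat => - (x 3%nat * x 5%nat) | 4%nat, 4%nat => - (x 4%nat * x 5%nat)
   | 4%nat, 5%nat => 1 - x 5%nat ^ 2
   | _, _ => 0
   end) / sqrt (1 - x 5%nat ^ 2).

(* dual coframe e^k at x, applied to a (tangent) vector u *)
Definition cof (k : nat) (x u : vec) : R := dot5 (frame k x) u.

Definition e2 (k l : nat) (x u v : vec) : R :=
  cof k x u * cof l x v - cof l x u * cof k x v.

Definition om (i : nat) (x u v : vec) : R :=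
  match i with
  | 1%nat => e2 1 2 x u v - e2 3 4 x u v
  | 2%nat => e2 1 3 x u v - e2 4 2 x u v
  | 3%nat => e2 1 4 x u v - e2 2 3 x u v
  | _ => 0
  end.

Definition sum_pairs (f : nat -> nat -> R) : R :=
  f 1%nat 2%nat + f 1%nat 3%nat + f 1%nat 4%nat
  + f 2%nat 3%nat + f 2%nat 4%nat + f 3%nat 4%nat.

(* gamma_{ji}(xi) at x, where nabla_xi omega_j = sum_i gamma_{ji}(xi) omega_i.
   The Levi-Civita connection of S^4 in R^5 is the tangential projection of
   the ambient derivative; hence (nabla_xi omega_j)(u,v) for tangent u,v is
   the ambient directional derivative of y |-> omega_j|_y(u,v).  The
   coefficient on omega_i is extracted with the inner product
   <eta,eta'> = sum_{p<q} eta(e_p,e_q) eta'(e_p,e_q), for which the omega_i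
   are orthogonal of squared norm 2. *)
Definition gam (j i : nat) (x xi : vec) : R :=
  / 2 * sum_pairs (fun p q =>
    deriv (fun s => om j (fun m => x m + s * xi m) (frame p x) (frame q x)) 0
    * om i x (frame p x) (frame q x)).

(* A point of Lambda^2_- over the chart: (x, (a_1,a_2,a_3)).
   A tangent vector of the total space: (xi, alpha) in R^5 x R^3. *)
Definition pt := (vec * vec)%type.

Definition r2 (a : vec) : R := a 1%nat ^ 2 + a 2%nat ^ 2 + a 3%nat ^ 2.

Definition bform (i : nat) (p : pt) (V : pt) : R :=
  snd V i + (snd p 1%nat * gam 1 i (fst p) (fst V)
           + snd p 2%nat * gam 2 i (fst p) (fst V)
           + snd p 3%nat * gam 3 i (fst p) (fst V)).

Definition pom (i : nat) (p : pt) (V W : pt) : R := om i (fst p) (fst V) (fst W).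

Definition b_wedge_om (i : nat) (p : pt) (V1 V2 V3 : pt) : R :=
  bform i p V1 * pom i p V2 V3 - bform i p V2 * pom i p V1 V3
  + bform i p V3 * pom i p V1 V2.

Definition b123 (p : pt) (V1 V2 V3 : pt) : R :=
  let b i V := bform i p V in
  b 1%nat V1 * (b 2%nat V2 * b 3%nat V3 - b 2%nat V3 * b 3%nat V2)
  - b 1%nat V2 * (b 2%nat V1 * b 3%nat V3 - b 2%nat V3 * b 3%nat V1)
  + b 1%nat V3 * (b 2%nat V1 * b 3%nat V2 - b 2%nat V2 * b 3%nat V1).

Definition s_lam (lam : R) (p : pt) : R := Rpower (lam + r2 (snd p)) (/ 4).

Definition phi (lam : R) (p : pt) (V1 V2 V3 : pt) : R :=
  2 * s_lam lam p * (b_wedge_om 1 p V1 V2 V3 + b_wedge_om 2 p V1 V2 V3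
                     + b_wedge_om 3 p V1 V2 V3)
  + / (s_lam lam p ^ 3) * b123 p V1 V2 V3.

(* SU(2), identified with the unit quaternions q = (q1,q2,q3,q4) via
   alpha = q1 + i q2, beta = q3 + i q4, g = [[alpha, -conj beta],[beta, conj alpha]],
   acting on C^2 = {(x1 + i x2, x3 + i x4)}, as a 5x5 real matrix fixing x5. *)
Definition on_S3 (q : vec) : Prop :=
  q 1%nat ^ 2 + q 2%nat ^ 2 + q 3%nat ^ 2 + q 4%nat ^ 2 = 1.

Definition su2 (q : vec) (i j : nat) : R :=
  let p := q 1%nat in let a := q 2%nat in let r := q 3%nat in let s := q 4%nat in
  (match i, j with
   | 1%nat, 1%nat => p | 1%nat, 2%nat => - a | 1%nat, 3%nat => - r | 1%nat, 4%nat => - s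
   | 2%nat, 1%nat => a | 2%nat, 2%nat => p | 2%nat, 3%nat => s | 2%nat, 4%nat => - r
   | 3%nat, 1%nat => r | 3%nat, 2%nat => - s | 3%nat, 3%nat => p | 3%nat, 4%nat => a
   | 4%nat, 1%nat => s | 4%nat, 2%nat => r | 4%nat, 3%nat => - a | 4%nat, 4%nat => p
   | 5%nat, 5%nat => 1
   | _, _ => 0
   end).

Definition matv (g : nat -> nat -> R) (u : vec) : vec := fun i =>
  g i 1%nat * u 1%nat + g i 2%nat * u 2%nat + g i 3%nat * u 3%nat
  + g i 4%nat * u 4%nat + g i 5%nat * u 5%nat.

(* transpose = inverse for orthogonal g *)
Definition matTv (g : nat -> nat -> R) (u : vec) : vec := fun i =>
  g 1%nat i * u 1%nat + g 2%nat i * u 2%nat + g 3%nat i * u 3%nat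
  + g 4%nat i * u 4%nat + g 5%nat i * u 5%nat.

(* action of g in SO(5) on Lambda^2_-: g . (x, a) = (g x, a') where
   sum_j a'_j omega_j|_{gx} = (g^{-1})^* (sum_i a_i omega_i|_x). *)
Definition act (g : nat -> nat -> R) (p : pt) : pt :=
  let x := fst p in let a := snd p in
  let y := matv g x in
  let eta u v := a 1%nat * om 1 x u v + a 2%nat * om 2 x u v + a 3%nat * om 3 x u v in
  (y, fun j => / 2 * sum_pairs (fun k l =>
        eta (matTv g (frame k y)) (matTv g (frame l y)) * om j y (frame k y) (frame l y))).

Definition cpath (x1 x5 a1 a2 a3 : R -> R) (t : R) : pt :=
  (fun m => match m with 1%nat => x1 t | 5%nat => x5 t | _ => 0 end,
   fun m => match m with 1%nat => a1 t | 2%nat => a2 t | 3%nat => a3 t | _ => 0 end).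

Definition Fmap (x1 x5 a1 a2 a3 : R -> R) (q : vec) (t : R) : pt :=
  act (su2 q) (cpath x1 x5 a1 a2 a3 t).

(* w is a tangent vector to SU(2).c(I) at F(q,t): the velocity at s = 0 of
   F(G(s),T(s)) for a curve (G,T) in SU(2) x I through (q,t),
   differentiable at 0. *)
Definition tangent_vec (I : R -> Prop) (F : vec -> R -> pt) (q : vec) (t : R)
  (w : pt) : Prop :=
  exists (G : R -> vec) (T : R -> R),
    (forall s, on_S3 (G s) /\ I (T s)) /\
    (forall k, (1 <= k <= 4)%nat -> G 0 k = q k) /\ T 0 = t /\
    (forall k, (1 <= k <= 4)%nat -> exists l, derivable_pt_lim (fun s => G s k) 0 l) /\
    (exists l, derivable_pt_lim T 0 l) /\
    (forall m, (1 <= m <= 5)%nat ->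
       derivable_pt_lim (fun s => fst (F (G s) (T s)) m) 0 (fst w m)) /\
    (forall m, (1 <= m <= 3)%nat ->
       derivable_pt_lim (fun s => snd (F (G s) (T s)) m) 0 (snd w m)).

(* Every tangent vector of SU(2).c(I) at g.c(t) is the velocity of a curve s |-> G(s).c(T(s)).
   In the frame adapted to the orbit its S^4-part has coordinates (c1, c2, c3, tau), where the
   c_k are the components of G'(0) in T_{G(0)} S^3 and tau = T'(0), and its fiber part is tau a'(t).
   On such vectors the forms b_i and pi^* omega_i are explicit, and phi_lambda on three of them
   collapses to s_lambda^-3 (K_1 d_1 + K_2 d_2 - K_3 d_3), where the d_i are 3x3 minors of the
   coordinate matrix and K_i is (1 + x5)^2 (lambda + r^2) / 2 times the i-th equation of the ODE.
   Two infinitesimal rotations together with the path velocity realise each minor separately,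
   so phi_lambda vanishes on the orbit iff every K_i does. *)

From Stdlib Require Import Reals Lra Lia ClassicalEpsilon FunctionalExtensionality.
From Coquelicot Require Import Coquelicot.
Open Scope R_scope.

Lemma deriv_eq_of_lim f t l : derivable_pt_lim f t l -> deriv f t = l.
Proof.
  intros H. unfold deriv. apply (uniqueness_limite f t); [|exact H].
  apply epsilon_spec. exists l; exact H.
Qed.

Lemma derivable_pt_lim_locally_const f t c l :
  locally t (fun u => f u = c) -> derivable_pt_lim f t l -> l = 0.
Proof.
  intros Hc Hf. apply is_derive_Reals in Hf.
  apply (uniqueness_limite (fun _ => c) t); [|apply derivable_pt_lim_const].
  apply is_derive_Reals, (is_derive_ext_loc f); [exact Hc | exact Hf].
Qed.

Lemma oint_open lo hi t : oint lo hi t ->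
  exists d, 0 < d /\ forall u, Rabs (u - t) < d -> oint lo hi u.
Proof.
  destruct lo as [l|], hi as [h|]; unfold oint; intros [Hl Hh].
  - exists (Rmin (t - l) (h - t)). split; [apply Rmin_glb_lt; lra|].
    intros u Hu. pose proof (Rmin_l (t - l) (h - t)). pose proof (Rmin_r (t - l) (h - t)).
    apply Rabs_def2 in Hu. split; lra.
  - exists (t - l). split; [lra|]. intros u Hu. apply Rabs_def2 in Hu. split; [lra|exact I].
  - exists (h - t). split; [lra|]. intros u Hu. apply Rabs_def2 in Hu. split; [exact I|lra].
  - exists 1. split; [lra|]. intros. split; exact I.
Qed.

Lemma oint_locally lo hi t : oint lo hi t -> locally t (oint lo hi).
Proof.
  intros Ht. destruct (oint_open lo hi t Ht) as [d [Hd Hu]].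
  exists (mkposreal d Hd). intros u Hb. apply Hu, Hb.
Qed.

Lemma circle_deriv_orth lo hi x1 x5 dx1 dx5 t :
  (forall t, oint lo hi t -> derivable_pt_lim x1 t (dx1 t)) ->
  (forall t, oint lo hi t -> derivable_pt_lim x5 t (dx5 t)) ->
  (forall t, oint lo hi t -> x1 t ^ 2 + x5 t ^ 2 = 1) ->
  oint lo hi t -> x1 t * dx1 t + x5 t * dx5 t = 0.
Proof.
  intros D1 D5 Hc Ht.
  assert (L : locally t (fun u => x1 u * x1 u + x5 u * x5 u = 1)).
  { apply (filter_imp (oint lo hi)); [|exact (oint_locally lo hi t Ht)].
    intros u Hu. rewrite <- (Hc u Hu). ring. }
  pose proof (derivable_pt_lim_locally_const _ _ _ _ L
    (derivable_pt_lim_plus _ _ t _ _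
      (derivable_pt_lim_mult _ _ t _ _ (D1 t Ht) (D1 t Ht))
      (derivable_pt_lim_mult _ _ t _ _ (D5 t Ht) (D5 t Ht)))).
  lra.
Qed.

(** * The coframe along lines of R^5 *)

Definition nframe (k : nat) (x : vec) : vec := fun m =>
  match k, m with
   | 1%nat, 1%nat => - x 2%nat | 1%nat, 2%nat => x 1%nat | 1%nat, 3%nat => - x 4%nat | 1%nat, 4%nat => x 3%nat
   | 2%nat, 1%nat => - x 3%nat | 2%nat, 2%nat => x 4%nat | 2%nat, 3%nat => x 1%nat | 2%nat, 4%nat => - x 2%nat
   | 3%nat, 1%nat => - x 4%nat | 3%nat, 2%nat => - x 3%nat | 3%nat, 3%nat => x 2%nat | 3%nat, 4%nat => x 1%nat
   | 4%nat, 1%nat => - (x 1%nat * x 5%nat) | 4%nat, 2%nat => - (x 2%nat * x 5%nat)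
   | 4%nat, 3%nat => - (x 3%nat * x 5%nat) | 4%nat, 4%nat => - (x 4%nat * x 5%nat)
   | 4%nat, 5%nat => 1 - x 5%nat ^ 2
   | _, _ => 0
   end.

Lemma frame_nframe k x m : frame k x m = nframe k x m / sqrt (1 - x 5%nat ^ 2).
Proof. reflexivity. Qed.

Definition dnframe (k : nat) (y xi : vec) : vec := fun m =>
  match k, m with
   | 4%nat, 1%nat => - (xi 1%nat * y 5%nat + y 1%nat * xi 5%nat)
   | 4%nat, 2%nat => - (xi 2%nat * y 5%nat + y 2%nat * xi 5%nat)
   | 4%nat, 3%nat => - (xi 3%nat * y 5%nat + y 3%nat * xi 5%nat)
   | 4%nat, 4%nat => - (xi 4%nat * y 5%nat + y 4%nat * xi 5%nat)
   | 4%nat, 5%nat => - (2 * y 5%nat * xi 5%nat)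
   | 4%nat, _ => 0
   | _, _ => nframe k xi m
   end.

Definition line (y xi : vec) (s : R) : vec := fun m => y m + s * xi m.

Lemma line0 y xi : line y xi 0 = y.
Proof. apply functional_extensionality; intro m; unfold line; ring. Qed.

Lemma nframe_line_deriv k y xi u :
  derivable_pt_lim (fun s => dot5 (nframe k (line y xi s)) u) 0 (dot5 (dnframe k y xi) u).
Proof.
  apply is_derive_Reals.
  destruct k as [|[|[|[|[|k]]]]]; unfold dot5, nframe, dnframe, line; simpl;
   auto_derive; auto; ring.
Qed.

Lemma inv_sqrt_line_deriv y5 xi5 : 0 < 1 - y5 ^ 2 ->
  derivable_pt_lim (fun s => / sqrt (1 - (y5 + s * xi5) ^ 2)) 0
    (y5 * xi5 / (sqrt (1 - y5 ^ 2)) ^ 3).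
Proof.
  intros H. apply is_derive_Reals.
  assert (HS : sqrt (1 - y5 ^ 2) <> 0) by (apply Rgt_not_eq, sqrt_lt_R0; lra).
  auto_derive.
  all: replace (y5 + 0 * xi5) with y5 by ring;
       replace (1 + - (y5 * (y5 * 1))) with (1 - y5 ^ 2) by ring.
  - repeat split; auto.
  - field. exact HS.
Qed.

Lemma cof_nframe k z u : cof k z u = dot5 (nframe k z) u * / sqrt (1 - z 5%nat ^ 2).
Proof. unfold cof, dot5. rewrite !frame_nframe. unfold Rdiv. ring. Qed.

Definition dcof (k : nat) (y xi u : vec) : R :=
  dot5 (dnframe k y xi) u * / sqrt (1 - y 5%nat ^ 2)
  + dot5 (nframe k y) u * (y 5%nat * xi 5%nat / (sqrt (1 - y 5%nat ^ 2)) ^ 3).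

Lemma cof_line_deriv k y xi u : 0 < 1 - y 5%nat ^ 2 ->
  derivable_pt_lim (fun s => cof k (line y xi s) u) 0 (dcof k y xi u).
Proof.
  intros H.
  assert (E : (fun s => cof k (line y xi s) u) =
     (fun s => dot5 (nframe k (line y xi s)) u * / sqrt (1 - (y 5%nat + s * xi 5%nat) ^ 2))).
  { apply functional_extensionality; intro s. apply cof_nframe. }
  rewrite E.
  pose proof (derivable_pt_lim_mult _ _ 0 _ _ (nframe_line_deriv k y xi u)
                (inv_sqrt_line_deriv (y 5%nat) (xi 5%nat) H)) as D.
  unfold mult_real_fct in D. rewrite line0, Rmult_0_l, Rplus_0_r in D. exact D.
Qed.

Definition de2 (k l : nat) (y xi u v : vec) : R :=
  dcof k y xi u * cof l y v + cof k y u * dcof l y xi v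
  - (dcof l y xi u * cof k y v + cof l y u * dcof k y xi v).

Definition dom (i : nat) (y xi u v : vec) : R :=
  match i with
  | 1%nat => de2 1 2 y xi u v - de2 3 4 y xi u v
  | 2%nat => de2 1 3 y xi u v - de2 4 2 y xi u v
  | 3%nat => de2 1 4 y xi u v - de2 2 3 y xi u v
  | _ => 0
  end.

Lemma e2_line_deriv k l y xi u v : 0 < 1 - y 5%nat ^ 2 ->
  derivable_pt_lim (fun s => e2 k l (line y xi s) u v) 0 (de2 k l y xi u v).
Proof.
  intros H.
  pose proof (derivable_pt_lim_minus _ _ 0 _ _
     (derivable_pt_lim_mult _ _ 0 _ _ (cof_line_deriv k y xi u H) (cof_line_deriv l y xi v H))
     (derivable_pt_lim_mult _ _ 0 _ _ (cof_line_deriv l y xi u H) (cof_line_deriv k y xi v H))) as D.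
  unfold minus_fct, mult_real_fct in D. rewrite !line0 in D. exact D.
Qed.

Lemma om_line_deriv i y xi u v : 0 < 1 - y 5%nat ^ 2 ->
  derivable_pt_lim (fun s => om i (line y xi s) u v) 0 (dom i y xi u v).
Proof.
  intros H.
  destruct i as [|[|[|[|i]]]]; simpl; try apply derivable_pt_lim_const;
  apply (derivable_pt_lim_minus (fun s => e2 _ _ (line y xi s) u v) (fun s => e2 _ _ (line y xi s) u v));
  apply e2_line_deriv; exact H.
Qed.

Lemma gam_dom j i y xi : 0 < 1 - y 5%nat ^ 2 ->
  gam j i y xi = / 2 * sum_pairs (fun p q =>
    dom j y xi (frame p y) (frame q y) * om i y (frame p y) (frame q y)).
Proof.
  intros H. unfold gam, sum_pairs.
  rewrite !(deriv_eq_of_lim _ _ _ (om_line_deriv j y xi _ _ H)). reflexivity.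
Qed.

(** * The frame over the SU(2)-orbits *)

Definition orbit_pt (X1 X5 : R) (q : vec) : vec := fun m =>
  match m with 1%nat => X1 * q 1%nat | 2%nat => X1 * q 2%nat | 3%nat => X1 * q 3%nat
  | 4%nat => X1 * q 4%nat | 5%nat => X5 | _ => 0 end.

Definition orbit_frame (k : nat) (X1 X5 : R) (q : vec) : vec := fun m =>
  match k, m with
   | 4%nat, 1%nat => - (X5 * q 1%nat) | 4%nat, 2%nat => - (X5 * q 2%nat)
   | 4%nat, 3%nat => - (X5 * q 3%nat) | 4%nat, 4%nat => - (X5 * q 4%nat)
   | 4%nat, 5%nat => X1
   | 4%nat, _ => 0
   | _, _ => nframe k q m
   end.

Definition kron (k p : nat) : R := if Nat.eqb k p then 1 else 0.

Definition dot4 (q g : vec) : R :=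
  q 1%nat * g 1%nat + q 2%nat * g 2%nat + q 3%nat * g 3%nat + q 4%nat * g 4%nat.

(* coordinates of g in the frame (nframe 1 q, nframe 2 q, nframe 3 q) of T_q S^3 *)
Definition qcoord (k : nat) (q g : vec) : R :=
  nframe k q 1%nat * g 1%nat + nframe k q 2%nat * g 2%nat
  + nframe k q 3%nat * g 3%nat + nframe k q 4%nat * g 4%nat.

(* the velocity of s |-> (X1(s) G(s), X5(s)), with X5' = tau X5d, G' = g and
   X1' eliminated through X1 X1' + X5 X5' = 0 *)
Definition orbit_dir (X1 X5 X5d tau : R) (q g : vec) : vec := fun m =>
  match m with
  | 1%nat => - (X5 * X5d / X1) * tau * q 1%nat + X1 * g 1%nat
  | 2%nat => - (X5 * X5d / X1) * tau * q 2%nat + X1 * g 2%nat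
  | 3%nat => - (X5 * X5d / X1) * tau * q 3%nat + X1 * g 3%nat
  | 4%nat => - (X5 * X5d / X1) * tau * q 4%nat + X1 * g 4%nat
  | 5%nat => X5d * tau
  | _ => 0 end.

Definition dcof_val (k p : nat) (c1 c2 c3 X5 : R) : R :=
  match k, p with
  | 1%nat, 2%nat => - c3 | 1%nat, 3%nat => c2 | 1%nat, 4%nat => X5 * c1
  | 2%nat, 1%nat => c3 | 2%nat, 3%nat => - c1 | 2%nat, 4%nat => X5 * c2
  | 3%nat, 1%nat => - c2 | 3%nat, 2%nat => c1 | 3%nat, 4%nat => X5 * c3
  | 4%nat, 1%nat => - (X5 * c1) | 4%nat, 2%nat => - (X5 * c2) | 4%nat, 3%nat => - (X5 * c3)
  | _, _ => 0 end.

Definition gam_val (j i : nat) (c1 c2 c3 X5 : R) : R :=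
  match j, i with
  | 1%nat, 2%nat => - ((1 + X5) * c1) | 2%nat, 1%nat => (1 + X5) * c1
  | 1%nat, 3%nat => (1 + X5) * c2 | 3%nat, 1%nat => - ((1 + X5) * c2)
  | 2%nat, 3%nat => (1 + X5) * c3 | 3%nat, 2%nat => - ((1 + X5) * c3)
  | _, _ => 0 end.

(** * The Bryant-Salamon form on orbit tangent vectors *)

Definition agree (u v : vec) : Prop := forall m, (1 <= m <= 5)%nat -> u m = v m.

Ltac rewrite_agree H :=
  let e1 := fresh in let e2 := fresh in let e3 := fresh in let e4 := fresh in let e5 := fresh in
  assert (e1 := H 1%nat ltac:(lia)); assert (e2 := H 2%nat ltac:(lia));
  assert (e3 := H 3%nat ltac:(lia)); assert (e4 := H 4%nat ltac:(lia));
  assert (e5 := H 5%nat ltac:(lia));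
  try rewrite e1; try rewrite e2; try rewrite e3; try rewrite e4; try rewrite e5.

Lemma cof_agree k y u u' : agree u u' -> cof k y u = cof k y u'.
Proof. intros H. unfold cof, dot5. rewrite_agree H. reflexivity. Qed.

Lemma om_agree i y u u' v v' : agree u u' -> agree v v' -> om i y u v = om i y u' v'.
Proof.
  intros H H'. destruct i as [|[|[|[|i]]]]; simpl; try reflexivity;
  unfold e2; rewrite !(cof_agree _ y u u' H), !(cof_agree _ y v v' H'); reflexivity.
Qed.

Lemma dcof_agree k y xi xi' u : agree xi xi' -> dcof k y xi u = dcof k y xi' u.
Proof.
  intros H. unfold dcof. rewrite (H 5%nat ltac:(lia)).
  replace (dot5 (dnframe k y xi) u) with (dot5 (dnframe k y xi') u); [reflexivity|].
  destruct k as [|[|[|[|[|k]]]]]; unfold dot5, dnframe, nframe; simpl; rewrite_agree H; reflexivity.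
Qed.

Lemma gam_agree j i y xi xi' : 0 < 1 - y 5%nat ^ 2 -> agree xi xi' ->
  gam j i y xi = gam j i y xi'.
Proof.
  intros Hy H. rewrite !gam_dom by exact Hy. unfold sum_pairs, dom, de2.
  destruct j as [|[|[|[|j]]]]; try reflexivity;
  rewrite !(dcof_agree _ y xi xi' _ H); reflexivity.
Qed.

Lemma phi_snd_agree lam y A A' V1 V2 V3 :
  A 1%nat = A' 1%nat -> A 2%nat = A' 2%nat -> A 3%nat = A' 3%nat ->
  phi lam (y, A) V1 V2 V3 = phi lam (y, A') V1 V2 V3.
Proof.
  intros E1 E2 E3.
  unfold phi, s_lam, r2, b_wedge_om, b123, bform, pom. simpl.
  rewrite E1, E2, E3. reflexivity.
Qed.

Lemma s_lam_spec lam p : 0 < lam -> 0 < s_lam lam p /\ s_lam lam p ^ 4 = lam + r2 (snd p).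
Proof.
  intros Hl. unfold s_lam.
  assert (Hp : 0 < lam + r2 (snd p)) by (unfold r2; nra).
  split; [apply exp_pos|].
  rewrite <- (Rpower_pow 4 _) by apply exp_pos.
  rewrite Rpower_mult. replace (/ 4 * INR 4) with 1 by (simpl; field).
  apply Rpower_1. exact Hp.
Qed.

(* V is the tangent vector (orbit_dir X1 X5 X5d tau q g, tau D) of the orbit; [g]
   is the S^3-velocity of the group curve and [tau] the velocity of the parameter. *)
Definition orbit_tangent (X1 X5 X5d : R) (D q : vec) (V : pt) (g : vec) (tau : R) : Prop :=
  dot4 q g = 0 /\ agree (fst V) (orbit_dir X1 X5 X5d tau q g) /\
  forall i, (1 <= i <= 3)%nat -> snd V i = D i * tau.

(* b_i and omega_i on orbit tangent vectors, in their coordinates (c1, c2, c3, tau) *)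
Definition bval (i : nat) (X5 : R) (A D : vec) (c1 c2 c3 tau : R) : R :=
  match i with
  | 1%nat => D 1%nat * tau + (1 + X5) * (A 2%nat * c1 - A 3%nat * c2)
  | 2%nat => D 2%nat * tau - (1 + X5) * (A 1%nat * c1 + A 3%nat * c3)
  | 3%nat => D 3%nat * tau + (1 + X5) * (A 1%nat * c2 + A 2%nat * c3)
  | _ => 0 end.

Definition wedge2 (u1 u2 v1 v2 : R) := u1 * v2 - u2 * v1.

Definition omval (i : nat) (u1 u2 u3 u4 v1 v2 v3 v4 : R) : R :=
  match i with
  | 1%nat => wedge2 u1 u2 v1 v2 - wedge2 u3 u4 v3 v4
  | 2%nat => wedge2 u1 u3 v1 v3 - wedge2 u4 u2 v4 v2
  | 3%nat => wedge2 u1 u4 v1 v4 - wedge2 u2 u3 v2 v3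
  | _ => 0 end.

Definition det3 (x1 y1 z1 x2 y2 z2 x3 y3 z3 : R) : R :=
  x1 * (y2 * z3 - y3 * z2) - x2 * (y1 * z3 - y3 * z1) + x3 * (y1 * z2 - y2 * z1).

(* th stands for X5d / X1; up to a positive factor this is the i-th equation of the ODE *)
Definition residual (lam : R) (A D : vec) (X1 X5 th : R) (i : nat) : R :=
  2 * (lam + r2 A) * (D i * X1 ^ 2 - 2 * A i * th * X1 * (1 + X5))
  - A i * (1 + X5) ^ 2 * (A 1%nat * D 1%nat + A 2%nat * D 2%nat + A 3%nat * D 3%nat).

Lemma phi_core_identity lam X1 X5 th (A D : vec)
  c11 c21 c31 t1 c12 c22 c32 t2 c13 c23 c33 t3 :
  let b i c1 c2 c3 t := bval i X5 A D c1 c2 c3 t in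
  let o i c1 c2 c3 t c1' c2' c3' t' :=
    omval i (X1 * c1) (X1 * c2) (X1 * c3) (t * th) (X1 * c1') (X1 * c2') (X1 * c3') (t' * th) in
  let bw i := b i c11 c21 c31 t1 * o i c12 c22 c32 t2 c13 c23 c33 t3
            - b i c12 c22 c32 t2 * o i c11 c21 c31 t1 c13 c23 c33 t3
            + b i c13 c23 c33 t3 * o i c11 c21 c31 t1 c12 c22 c32 t2 in
  2 * (lam + r2 A) * (bw 1%nat + bw 2%nat + bw 3%nat)
  + det3 (b 1%nat c11 c21 c31 t1) (b 2%nat c11 c21 c31 t1) (b 3%nat c11 c21 c31 t1)
         (b 1%nat c12 c22 c32 t2) (b 2%nat c12 c22 c32 t2) (b 3%nat c12 c22 c32 t2)
         (b 1%nat c13 c23 c33 t3) (b 2%nat c13 c23 c33 t3) (b 3%nat c13 c23 c33 t3) =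
  residual lam A D X1 X5 th 1 * det3 c11 c21 t1 c12 c22 t2 c13 c23 t3
  + residual lam A D X1 X5 th 2 * det3 c11 c31 t1 c12 c32 t2 c13 c33 t3
  - residual lam A D X1 X5 th 3 * det3 c21 c31 t1 c22 c32 t2 c23 c33 t3.
Proof.
  intros. unfold bw, b, o, bval, omval, wedge2, residual, det3, r2. simpl. ring.
Qed.

Section OrbitFrame.

Variables (X1 X5 X5d : R) (q : vec).
Hypotheses (hX1 : 0 < X1) (hcirc : X1 ^ 2 + X5 ^ 2 = 1) (hq : on_S3 q).

Lemma sqrt_one_minus_X5 : sqrt (1 - X5 ^ 2) = X1.
Proof. replace (1 - X5 ^ 2) with (X1 ^ 2) by lra. apply sqrt_pow2. lra. Qed.

Lemma orbit_pt_off_poles : 0 < 1 - orbit_pt X1 X5 q 5%nat ^ 2.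
Proof. simpl. nra. Qed.

Lemma frame_orbit_pt k : frame k (orbit_pt X1 X5 q) = orbit_frame k X1 X5 q.
Proof.
  apply functional_extensionality; intro m.
  rewrite frame_nframe. change (orbit_pt X1 X5 q 5%nat) with X5. rewrite sqrt_one_minus_X5.
  replace (1 - X5 ^ 2) with (X1 ^ 2) by lra.
  destruct k as [|[|[|[|[|k]]]]]; destruct m as [|[|[|[|[|[|m]]]]]];
   unfold nframe, orbit_frame, orbit_pt; simpl; try (field; lra);
  replace (1 - X5 * (X5 * 1)) with (X1 ^ 2) by nra; field; lra.
Qed.

Lemma cof_orbit_frame k p : (1 <= k <= 4)%nat -> (1 <= p <= 4)%nat ->
  cof k (orbit_pt X1 X5 q) (orbit_frame p X1 X5 q) = kron k p.
Proof.
  intros Hk Hp. unfold cof. rewrite frame_orbit_pt.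
  unfold on_S3 in hq.
  destruct k as [|[|[|[|[|k]]]]]; try lia; destruct p as [|[|[|[|[|p]]]]]; try lia;
  unfold dot5, orbit_frame, nframe, kron; simpl;
  first [ring | (rewrite <- hq; ring) | nra].
Qed.

Lemma cof_orbit_dir k tau g : dot4 q g = 0 ->
  cof k (orbit_pt X1 X5 q) (orbit_dir X1 X5 X5d tau q g) =
  match k with 1%nat => X1 * qcoord 1 q g | 2%nat => X1 * qcoord 2 q g
   | 3%nat => X1 * qcoord 3 q g | 4%nat => tau * X5d / X1 | _ => 0 end.
Proof.
  intros Hqg. unfold cof. rewrite frame_orbit_pt.
  unfold on_S3 in hq. unfold dot4 in Hqg.
  destruct k as [|[|[|[|[|k]]]]];
  unfold dot5, orbit_frame, nframe, qcoord, orbit_dir; simpl; try (field; lra).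
  transitivity (- X5 * X1 * (q 1%nat * g 1%nat + q 2%nat * g 2%nat + q 3%nat * g 3%nat + q 4%nat * g 4%nat)
     + X5 ^ 2 * X5d * tau * (q 1%nat ^ 2 + q 2%nat ^ 2 + q 3%nat ^ 2 + q 4%nat ^ 2 - 1) / X1
     + X5d * tau * (X5 ^ 2 + X1 ^ 2 - 1) / X1 + tau * X5d / X1).
  - field; lra.
  - rewrite Hqg, hq. replace (X5 ^ 2 + X1 ^ 2 - 1) with 0 by lra. field. lra.
Qed.

Lemma dcof_orbit k p tau g : dot4 q g = 0 ->
  (1 <= k <= 4)%nat -> (1 <= p <= 4)%nat ->
  dcof k (orbit_pt X1 X5 q) (orbit_dir X1 X5 X5d tau q g) (orbit_frame p X1 X5 q)
  = dcof_val k p (qcoord 1 q g) (qcoord 2 q g) (qcoord 3 q g) X5.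
Proof.
  intros Hqg Hk Hp. unfold dcof.
  change (orbit_pt X1 X5 q 5%nat) with X5. rewrite sqrt_one_minus_X5.
  unfold on_S3 in hq. unfold dot4 in Hqg.
  destruct k as [|[|[|[|[|k]]]]]; try lia; destruct p as [|[|[|[|[|p]]]]]; try lia;
  unfold dot5, orbit_frame, nframe, dnframe, dcof_val, qcoord, orbit_dir, orbit_pt; simpl;
  try (field; lra).
  all: try (transitivity (q 1%nat * g 1%nat + q 2%nat * g 2%nat + q 3%nat * g 3%nat + q 4%nat * g 4%nat);
       [field; lra | exact Hqg]).
  transitivity (X5 ^ 2 * (q 1%nat * g 1%nat + q 2%nat * g 2%nat + q 3%nat * g 3%nat + q 4%nat * g 4%nat)
     + X5 * X5d * tau * (q 1%nat ^ 2 + q 2%nat ^ 2 + q 3%nat ^ 2 + q 4%nat ^ 2 - 1)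
     + X5 * X5d * tau * (1 - X5 ^ 2 - X1 ^ 2) / X1 ^ 2).
  - field; lra.
  - rewrite Hqg, hq. replace (1 - X5 ^ 2 - X1 ^ 2) with 0 by lra. field. lra.
Qed.

Lemma gam_orbit j i tau g : dot4 q g = 0 -> (1 <= j <= 3)%nat -> (1 <= i <= 3)%nat ->
  gam j i (orbit_pt X1 X5 q) (orbit_dir X1 X5 X5d tau q g)
  = gam_val j i (qcoord 1 q g) (qcoord 2 q g) (qcoord 3 q g) X5.
Proof.
  intros Hqg Hj Hi.
  rewrite gam_dom by exact orbit_pt_off_poles.
  unfold sum_pairs. rewrite !frame_orbit_pt.
  destruct j as [|[|[|[|j]]]]; try lia; destruct i as [|[|[|[|i]]]]; try lia;
  unfold dom, de2, om, e2;
  rewrite !cof_orbit_frame by lia; rewrite !(dcof_orbit _ _ tau g Hqg) by lia;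
  unfold kron, dcof_val, gam_val; simpl; field.
Qed.

Section Tangent.

Variables (D : vec) (V W : pt) (g h : vec) (tau sig : R).
Hypotheses (hV : orbit_tangent X1 X5 X5d D q V g tau)
           (hW : orbit_tangent X1 X5 X5d D q W h sig).

Lemma bform_orbit i (A : vec) : (1 <= i <= 3)%nat ->
  bform i (orbit_pt X1 X5 q, A) V
  = bval i X5 A D (qcoord 1 q g) (qcoord 2 q g) (qcoord 3 q g) tau.
Proof.
  destruct hV as [Hqg [Hag Hs]]. intros Hi.
  unfold bform. simpl fst; simpl snd.
  rewrite !(gam_agree _ _ _ _ _ orbit_pt_off_poles Hag).
  rewrite !(gam_orbit _ _ tau g Hqg) by lia.
  destruct i as [|[|[|[|i]]]]; try lia; rewrite (Hs _ Hi);
  unfold gam_val, bval; simpl; ring.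
Qed.

Lemma pom_orbit i (A : vec) :
  pom i (orbit_pt X1 X5 q, A) V W
  = omval i (X1 * qcoord 1 q g) (X1 * qcoord 2 q g) (X1 * qcoord 3 q g) (tau * (X5d / X1))
            (X1 * qcoord 1 q h) (X1 * qcoord 2 q h) (X1 * qcoord 3 q h) (sig * (X5d / X1)).
Proof.
  destruct hV as [Hqg [Hag _]], hW as [Hqh [Hah _]].
  unfold pom. simpl fst.
  rewrite (om_agree i _ _ _ _ _ Hag Hah).
  destruct i as [|[|[|[|i]]]]; simpl; try reflexivity; unfold e2, wedge2;
  rewrite !(cof_orbit_dir _ _ _ Hqg), !(cof_orbit_dir _ _ _ Hqh); unfold Rdiv; ring.
Qed.

End Tangent.

Lemma phi_orbit lam (A D : vec) V1 g1 t1 V2 g2 t2 V3 g3 t3 : 0 < lam ->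
  orbit_tangent X1 X5 X5d D q V1 g1 t1 ->
  orbit_tangent X1 X5 X5d D q V2 g2 t2 ->
  orbit_tangent X1 X5 X5d D q V3 g3 t3 ->
  phi lam (orbit_pt X1 X5 q, A) V1 V2 V3 =
  / s_lam lam (orbit_pt X1 X5 q, A) ^ 3 *
  (residual lam A D X1 X5 (X5d / X1) 1
     * det3 (qcoord 1 q g1) (qcoord 2 q g1) t1 (qcoord 1 q g2) (qcoord 2 q g2) t2
            (qcoord 1 q g3) (qcoord 2 q g3) t3
   + residual lam A D X1 X5 (X5d / X1) 2
     * det3 (qcoord 1 q g1) (qcoord 3 q g1) t1 (qcoord 1 q g2) (qcoord 3 q g2) t2
            (qcoord 1 q g3) (qcoord 3 q g3) t3
   - residual lam A D X1 X5 (X5d / X1) 3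
     * det3 (qcoord 2 q g1) (qcoord 3 q g1) t1 (qcoord 2 q g2) (qcoord 3 q g2) t2
            (qcoord 2 q g3) (qcoord 3 q g3) t3).
Proof.
  intros Hl T1 T2 T3.
  unfold phi, b_wedge_om, b123. cbv beta zeta.
  rewrite !(bform_orbit _ _ _ _ T1), !(bform_orbit _ _ _ _ T2), !(bform_orbit _ _ _ _ T3) by lia.
  rewrite !(pom_orbit _ _ _ _ _ _ _ T1 T2), !(pom_orbit _ _ _ _ _ _ _ T1 T3),
          !(pom_orbit _ _ _ _ _ _ _ T2 T3).
  destruct (s_lam_spec lam (orbit_pt X1 X5 q, A) Hl) as [Hs Hs4].
  set (s := s_lam lam (orbit_pt X1 X5 q, A)) in *.
  (* 2 s = 2 s^4 / s^3 = 2 (lam + r^2) / s^3 *)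
  match goal with |- 2 * s * ?X + / s ^ 3 * ?Y = _ =>
    transitivity (/ s ^ 3 * (2 * s ^ 4 * X + Y)); [field; lra|] end.
  rewrite Hs4. f_equal.
  exact (phi_core_identity lam X1 X5 (X5d / X1) A D
    (qcoord 1 q g1) (qcoord 2 q g1) (qcoord 3 q g1) t1 (qcoord 1 q g2) (qcoord 2 q g2) (qcoord 3 q g2) t2
    (qcoord 1 q g3) (qcoord 2 q g3) (qcoord 3 q g3) t3).
Qed.

End OrbitFrame.

(** * The SU(2)-orbit of the path and its tangent vectors *)

Definition q0 : vec := fun m => match m with 1%nat => 1 | _ => 0 end.

Lemma q0_S3 : on_S3 q0.
Proof. unfold on_S3, q0. simpl. ring. Qed.

Definition coef3 (f1 f2 f3 : R -> R) (t : R) : vec := fun m =>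
  match m with 1%nat => f1 t | 2%nat => f2 t | 3%nat => f3 t | _ => 0 end.

Lemma cpath_orbit_pt x1 x5 a1 a2 a3 t :
  cpath x1 x5 a1 a2 a3 t = (orbit_pt (x1 t) (x5 t) q0, coef3 a1 a2 a3 t).
Proof.
  unfold cpath. f_equal; apply functional_extensionality; intro m;
  unfold orbit_pt, coef3, q0; destruct m as [|[|[|[|[|[|m]]]]]]; simpl; ring.
Qed.

Lemma act_su2_fst X1 X5 q a :
  fst (act (su2 q) (orbit_pt X1 X5 q0, a)) = orbit_pt X1 X5 q.
Proof.
  unfold act. simpl fst. apply functional_extensionality; intro m.
  unfold matv, su2, orbit_pt, q0. destruct m as [|[|[|[|[|[|m]]]]]]; simpl; ring.
Qed.

Lemma matTv_su2_orbit_frame k X1 X5 q : on_S3 q ->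
  matTv (su2 q) (orbit_frame k X1 X5 q) = orbit_frame k X1 X5 q0.
Proof.
  intros Hq. unfold on_S3 in Hq. apply functional_extensionality; intro m.
  unfold matTv, su2, orbit_frame, nframe, q0.
  destruct k as [|[|[|[|[|k]]]]]; destruct m as [|[|[|[|[|[|m]]]]]]; simpl;
  first [ring | (rewrite <- Hq; ring) | nra].
Qed.

Lemma act_su2_snd X1 X5 q a j : 0 < X1 -> X1 ^ 2 + X5 ^ 2 = 1 -> on_S3 q ->
  (1 <= j <= 3)%nat -> snd (act (su2 q) (orbit_pt X1 X5 q0, a)) j = a j.
Proof.
  intros H1 H2 Hq Hj.
  unfold act. cbv beta zeta. cbn [snd].
  change (matv (su2 q) (fst (orbit_pt X1 X5 q0, a))) with (fst (act (su2 q) (orbit_pt X1 X5 q0, a))).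
  rewrite act_su2_fst. cbn [fst].
  unfold sum_pairs. rewrite !frame_orbit_pt by assumption.
  rewrite !matTv_su2_orbit_frame by assumption.
  destruct j as [|[|[|[|j]]]]; try lia; unfold om, e2;
  rewrite !(cof_orbit_frame X1 X5 q H1 H2 Hq) by lia;
  rewrite !(cof_orbit_frame X1 X5 q0 H1 H2 q0_S3) by lia;
  unfold kron; simpl; field.
Qed.

Lemma Fmap_fst x1 x5 a1 a2 a3 q t :
  fst (Fmap x1 x5 a1 a2 a3 q t) = orbit_pt (x1 t) (x5 t) q.
Proof. unfold Fmap. rewrite cpath_orbit_pt. apply act_su2_fst. Qed.

Lemma Fmap_snd x1 x5 a1 a2 a3 q t j : 0 < x1 t -> x1 t ^ 2 + x5 t ^ 2 = 1 -> on_S3 q ->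
  (1 <= j <= 3)%nat -> snd (Fmap x1 x5 a1 a2 a3 q t) j = coef3 a1 a2 a3 t j.
Proof. intros. unfold Fmap. rewrite cpath_orbit_pt. apply act_su2_snd; assumption. Qed.

Lemma phi_Fmap lam x1 x5 a1 a2 a3 q t V1 V2 V3 :
  0 < x1 t -> x1 t ^ 2 + x5 t ^ 2 = 1 -> on_S3 q ->
  phi lam (Fmap x1 x5 a1 a2 a3 q t) V1 V2 V3
  = phi lam (orbit_pt (x1 t) (x5 t) q, coef3 a1 a2 a3 t) V1 V2 V3.
Proof.
  intros H1 H2 Hq.
  rewrite (surjective_pairing (Fmap x1 x5 a1 a2 a3 q t)), Fmap_fst.
  apply phi_snd_agree; apply Fmap_snd; auto; lia.
Qed.

Definition orbit_vec (X1 X5 X5d : R) (D : vec) (tau : R) (q g : vec) : pt :=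
  (orbit_dir X1 X5 X5d tau q g, fun i => D i * tau).

Lemma orbit_tangent_orbit_vec X1 X5 X5d D tau q g : dot4 q g = 0 ->
  orbit_tangent X1 X5 X5d D q (orbit_vec X1 X5 X5d D tau q g) g tau.
Proof. intros Hqg. split; [exact Hqg|]. split; [intros m _; reflexivity | intros i _; reflexivity]. Qed.

Definition rot_vec (k : nat) : vec := fun m => if Nat.eqb m (S k) then 1 else 0.

Definition rot_curve (k : nat) (s : R) : vec := fun m =>
  match m with 1%nat => cos s | _ => if Nat.eqb m (S k) then sin s else 0 end.

Lemma phi_rot_path lam X1 X5 X5d (A D : vec) tau :
  0 < lam -> 0 < X1 -> X1 ^ 2 + X5 ^ 2 = 1 ->
  let R k := orbit_vec X1 X5 X5d D 0 q0 (rot_vec k) in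
  let P := orbit_vec X1 X5 X5d D tau q0 (fun _ => 0) in
  let S := / s_lam lam (orbit_pt X1 X5 q0, A) ^ 3 * tau in
  let K := residual lam A D X1 X5 (X5d / X1) in
  phi lam (orbit_pt X1 X5 q0, A) (R 1%nat) (R 2%nat) P = S * K 1%nat /\
  phi lam (orbit_pt X1 X5 q0, A) (R 1%nat) (R 3%nat) P = S * K 2%nat /\
  phi lam (orbit_pt X1 X5 q0, A) (R 2%nat) (R 3%nat) P = - (S * K 3%nat).
Proof.
  intros Hl H1 H2 R P S K.
  assert (HR : forall k, (1 <= k <= 3)%nat ->
    orbit_tangent X1 X5 X5d D q0 (R k) (rot_vec k) 0).
  { intros k Hk. apply orbit_tangent_orbit_vec.
    unfold dot4, q0, rot_vec; destruct k as [|[|[|[|k]]]]; try lia; simpl; ring. }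
  assert (HP : orbit_tangent X1 X5 X5d D q0 P (fun _ => 0) tau).
  { apply orbit_tangent_orbit_vec. unfold dot4; ring. }
  assert (Hphi : forall j k, (1 <= j <= 3)%nat -> (1 <= k <= 3)%nat ->
    phi lam (orbit_pt X1 X5 q0, A) (R j) (R k) P =
    / s_lam lam (orbit_pt X1 X5 q0, A) ^ 3 *
    (K 1%nat * det3 (kron 1 j) (kron 2 j) 0 (kron 1 k) (kron 2 k) 0 0 0 tau
     + K 2%nat * det3 (kron 1 j) (kron 3 j) 0 (kron 1 k) (kron 3 k) 0 0 0 tau
     - K 3%nat * det3 (kron 2 j) (kron 3 j) 0 (kron 2 k) (kron 3 k) 0 0 0 tau)).
  { intros j k Hj Hk.
    rewrite (phi_orbit X1 X5 X5d q0 H1 H2 q0_S3 lam A D _ _ _ _ _ _ _ _ _ Hl (HR j Hj) (HR k Hk) HP).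
    set (s := / s_lam lam (orbit_pt X1 X5 q0, A) ^ 3).
    destruct j as [|[|[|[|j]]]]; try lia; destruct k as [|[|[|[|k]]]]; try lia;
    unfold K, det3, qcoord, nframe, q0, rot_vec, kron; simpl; ring. }
  rewrite !Hphi by lia. unfold S, kron, det3; simpl; repeat split; ring.
Qed.

Lemma residual_ode lam (A D : vec) X1 X5 X5d i :
  0 < lam -> 0 < X1 -> X1 ^ 2 + X5 ^ 2 = 1 ->
  residual lam A D X1 X5 (X5d / X1) i =
  (1 + X5) ^ 2 * (lam + r2 A) / 2 *
  (4 * D i * ((1 - X5) / (1 + X5))
   - A i * (2 * (A 1%nat * D 1%nat + A 2%nat * D 2%nat + A 3%nat * D 3%nat) / (lam + r2 A)
            + 8 * X5d / (1 + X5))).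
Proof.
  intros Hl H1 H2. unfold residual.
  assert (H5 : 0 < 1 + X5) by nra.
  assert (Hr : 0 < lam + r2 A) by (unfold r2; nra).
  replace (X1 ^ 2) with (1 - X5 ^ 2) by lra.
  field. lra.
Qed.

Lemma residual_zero_iff lam (A D : vec) X1 X5 X5d i :
  0 < lam -> 0 < X1 -> X1 ^ 2 + X5 ^ 2 = 1 ->
  residual lam A D X1 X5 (X5d / X1) i = 0 <->
  4 * D i * ((1 - X5) / (1 + X5))
   - A i * (2 * (A 1%nat * D 1%nat + A 2%nat * D 2%nat + A 3%nat * D 3%nat) / (lam + r2 A)
            + 8 * X5d / (1 + X5)) = 0.
Proof.
  intros Hl H1 H2. rewrite residual_ode by assumption.
  assert (Hf : 0 < (1 + X5) ^ 2 * (lam + r2 A) / 2).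
  { assert (0 < 1 + X5) by nra. assert (0 < lam + r2 A) by (unfold r2; nra).
    apply Rmult_lt_0_compat; [apply Rmult_lt_0_compat; [apply pow_lt|]|]; lra. }
  split; intros H.
  - destruct (Rmult_integral _ _ H); [lra | assumption].
  - rewrite H. ring.
Qed.

Lemma log_potential_deriv lam (x5 a1 a2 a3 : R -> R) t d5 e1 e2 e3 :
  0 < lam -> 0 < 1 + x5 t ->
  derivable_pt_lim x5 t d5 -> derivable_pt_lim a1 t e1 ->
  derivable_pt_lim a2 t e2 -> derivable_pt_lim a3 t e3 ->
  derivable_pt_lim (fun u => ln (lam + (a1 u ^ 2 + a2 u ^ 2 + a3 u ^ 2)) + 8 * ln (1 + x5 u)) t
    (2 * (a1 t * e1 + a2 t * e2 + a3 t * e3) / (lam + (a1 t ^ 2 + a2 t ^ 2 + a3 t ^ 2))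
     + 8 * d5 / (1 + x5 t)).
Proof.
  intros Hl H5 D5 D1 D2 D3.
  apply is_derive_Reals in D5, D1, D2, D3.
  apply is_derive_Reals.
  auto_derive.
  - repeat split; try (eexists; eassumption). nra. lra.
  - replace (Derive (fun x => x5 x) t) with d5 by (symmetry; apply is_derive_unique, D5).
    replace (Derive (fun x => a1 x) t) with e1 by (symmetry; apply is_derive_unique, D1).
    replace (Derive (fun x => a2 x) t) with e2 by (symmetry; apply is_derive_unique, D2).
    replace (Derive (fun x => a3 x) t) with e3 by (symmetry; apply is_derive_unique, D3).
    field. split; nra.
Qed.

Lemma S3_curve_tangent (G : R -> vec) q l :
  (forall s, on_S3 (G s)) -> (forall k, (1 <= k <= 4)%nat -> G 0 k = q k) ->
  (forall k, (1 <= k <= 4)%nat -> derivable_pt_lim (fun s => G s k) 0 (l k)) ->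
  dot4 q l = 0.
Proof.
  intros HS HG0 Hl.
  assert (L : locally 0 (fun s => G s 1%nat * G s 1%nat + G s 2%nat * G s 2%nat
                                + G s 3%nat * G s 3%nat + G s 4%nat * G s 4%nat = 1)).
  { apply filter_forall. intros s. rewrite <- (HS s). unfold on_S3. ring. }
  pose proof (derivable_pt_lim_locally_const _ _ _ _ L
    (derivable_pt_lim_plus _ _ 0 _ _
      (derivable_pt_lim_plus _ _ 0 _ _
        (derivable_pt_lim_plus _ _ 0 _ _
          (derivable_pt_lim_mult _ _ 0 _ _ (Hl 1%nat ltac:(lia)) (Hl 1%nat ltac:(lia)))
          (derivable_pt_lim_mult _ _ 0 _ _ (Hl 2%nat ltac:(lia)) (Hl 2%nat ltac:(lia))))
        (derivable_pt_lim_mult _ _ 0 _ _ (Hl 3%nat ltac:(lia)) (Hl 3%nat ltac:(lia))))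
      (derivable_pt_lim_mult _ _ 0 _ _ (Hl 4%nat ltac:(lia)) (Hl 4%nat ltac:(lia))))) as E.
  cbv beta in E. rewrite !HG0 in E by lia. unfold dot4. lra.
Qed.

Lemma smooth_on_derivable I f : smooth_on I f ->
  exists df : R -> R, forall t, I t -> derivable_pt_lim f t (df t).
Proof.
  intros [Dn [E HD]]. exists (Dn 1%nat). intros t Ht. rewrite <- E. apply HD, Ht.
Qed.

Section Path.

Variables (lam : R) (lo hi : option R) (x1 x5 a1 a2 a3 dx1 dx5 da1 da2 da3 : R -> R).
Hypotheses (hlam : 0 < lam)
  (Dx1 : forall t, oint lo hi t -> derivable_pt_lim x1 t (dx1 t))
  (Dx5 : forall t, oint lo hi t -> derivable_pt_lim x5 t (dx5 t))
  (Da1 : forall t, oint lo hi t -> derivable_pt_lim a1 t (da1 t))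
  (Da2 : forall t, oint lo hi t -> derivable_pt_lim a2 t (da2 t))
  (Da3 : forall t, oint lo hi t -> derivable_pt_lim a3 t (da3 t))
  (hpos : forall t, oint lo hi t -> 0 < x1 t)
  (hcirc : forall t, oint lo hi t -> x1 t ^ 2 + x5 t ^ 2 = 1).

Let F := Fmap x1 x5 a1 a2 a3.

Let tvec t (tau : R) (q g : vec) : pt :=
  orbit_vec (x1 t) (x5 t) (dx5 t) (coef3 da1 da2 da3 t) tau q g.

Lemma derivable_pt_lim_path_comp f df (T : R -> R) t lT :
  (forall u, oint lo hi u -> derivable_pt_lim f u (df u)) ->
  oint lo hi t -> T 0 = t -> derivable_pt_lim T 0 lT ->
  derivable_pt_lim (fun s => f (T s)) 0 (df t * lT).
Proof.
  intros Df Ht HT0 HT. rewrite <- HT0 in Ht |- *.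
  exact (derivable_pt_lim_comp T f 0 lT (df (T 0)) HT (Df _ Ht)).
Qed.

Lemma Fmap_curve_deriv (G : R -> vec) (T : R -> R) q t lT (l : vec) :
  (forall s, on_S3 (G s) /\ oint lo hi (T s)) ->
  (forall k, (1 <= k <= 4)%nat -> G 0 k = q k) -> T 0 = t ->
  (forall k, (1 <= k <= 4)%nat -> derivable_pt_lim (fun s => G s k) 0 (l k)) ->
  derivable_pt_lim T 0 lT ->
  (forall m, (1 <= m <= 5)%nat ->
     derivable_pt_lim (fun s => fst (F (G s) (T s)) m) 0 (fst (tvec t lT q l) m)) /\
  (forall m, (1 <= m <= 3)%nat ->
     derivable_pt_lim (fun s => snd (F (G s) (T s)) m) 0 (snd (tvec t lT q l) m)).
Proof.
  intros HGT HG0 HT0 Hl HT.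
  assert (Ht : oint lo hi t) by (rewrite <- HT0; apply HGT).
  assert (Hdx1 : dx1 t = - (x5 t * dx5 t) / x1 t).
  { pose proof (circle_deriv_orth lo hi x1 x5 dx1 dx5 t Dx1 Dx5 hcirc Ht).
    pose proof (hpos t Ht). field_simplify_eq; lra. }
  pose proof (hpos t Ht) as H1.
  pose proof (derivable_pt_lim_path_comp x1 dx1 T t lT Dx1 Ht HT0 HT) as C1.
  split.
  - intros m Hm.
    assert (Ef : (fun s => fst (F (G s) (T s)) m) = (fun s => orbit_pt (x1 (T s)) (x5 (T s)) (G s) m)).
    { apply functional_extensionality; intro s. unfold F. rewrite Fmap_fst. reflexivity. }
    rewrite Ef.
    destruct m as [|[|[|[|[|[|m]]]]]]; try lia; unfold orbit_pt, tvec, orbit_vec, orbit_dir; simpl;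
    [ .. | exact (derivable_pt_lim_path_comp x5 dx5 T t lT Dx5 Ht HT0 HT)];
    match goal with |- derivable_pt_lim (fun s => _ * G s ?k) _ _ =>
      pose proof (derivable_pt_lim_mult _ _ 0 _ _ C1 (Hl k ltac:(lia))) as C;
      cbv beta in C; rewrite HT0, (HG0 k ltac:(lia)), Hdx1 in C;
      replace (- (x5 t * dx5 t / x1 t) * lT * q k + x1 t * l k)
        with (- (x5 t * dx5 t) / x1 t * lT * q k + x1 t * l k) by (field; lra);
      exact C end.
  - intros m Hm.
    assert (Ef : (fun s => snd (F (G s) (T s)) m) = (fun s => coef3 a1 a2 a3 (T s) m)).
    { apply functional_extensionality; intro s. destruct (HGT s) as [Hs Hts].
      unfold F. rewrite Fmap_snd by auto. reflexivity. }
    rewrite Ef.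
    destruct m as [|[|[|[|m]]]]; try lia; unfold coef3, tvec, orbit_vec; simpl;
    apply derivable_pt_lim_path_comp; assumption.
Qed.

Lemma tangent_vec_of_curve (G : R -> vec) (T : R -> R) q t lT (l : vec) :
  (forall s, on_S3 (G s) /\ oint lo hi (T s)) ->
  (forall k, (1 <= k <= 4)%nat -> G 0 k = q k) -> T 0 = t ->
  (forall k, (1 <= k <= 4)%nat -> derivable_pt_lim (fun s => G s k) 0 (l k)) ->
  derivable_pt_lim T 0 lT ->
  tangent_vec (oint lo hi) F q t (tvec t lT q l).
Proof.
  intros HGT HG0 HT0 Hl HT.
  destruct (Fmap_curve_deriv G T q t lT l HGT HG0 HT0 Hl HT) as [Hfst Hsnd].
  exists G, T. split; [exact HGT|]. split; [exact HG0|]. split; [exact HT0|].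
  split; [intros k Hk; exists (l k); apply Hl, Hk|].
  split; [exists lT; exact HT|].
  split; assumption.
Qed.

Lemma orbit_tangent_of_tangent_vec q t w : oint lo hi t ->
  tangent_vec (oint lo hi) F q t w ->
  exists g tau, orbit_tangent (x1 t) (x5 t) (dx5 t) (coef3 da1 da2 da3 t) q w g tau.
Proof.
  intros Ht [G [T [HGT [HG0 [HT0 [HGd [[lT HT] [Hfst Hsnd]]]]]]]].
  destruct (HGd 1%nat ltac:(lia)) as [l1 Hl1], (HGd 2%nat ltac:(lia)) as [l2 Hl2],
           (HGd 3%nat ltac:(lia)) as [l3 Hl3], (HGd 4%nat ltac:(lia)) as [l4 Hl4].
  set (l := fun m => match m with 1%nat => l1 | 2%nat => l2 | 3%nat => l3 | 4%nat => l4 | _ => 0 end).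
  assert (Hl : forall k, (1 <= k <= 4)%nat -> derivable_pt_lim (fun s => G s k) 0 (l k)).
  { intros k Hk. destruct k as [|[|[|[|[|k]]]]]; try lia; assumption. }
  destruct (Fmap_curve_deriv G T q t lT l HGT HG0 HT0 Hl HT) as [Hfst' Hsnd'].
  exists l, lT. split; [|split].
  - apply (S3_curve_tangent G q l); [intro s; apply HGT | exact HG0 | exact Hl].
  - intros m Hm. exact (uniqueness_limite _ _ _ _ (Hfst m Hm) (Hfst' m Hm)).
  - intros i Hi. exact (uniqueness_limite _ _ _ _ (Hsnd i Hi) (Hsnd' i Hi)).
Qed.

Lemma rot_tangent_vec k t : (1 <= k <= 3)%nat -> oint lo hi t ->
  tangent_vec (oint lo hi) F q0 t (tvec t 0 q0 (rot_vec k)).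
Proof.
  intros Hk Ht.
  apply (tangent_vec_of_curve (rot_curve k) (fun _ => t)); try reflexivity.
  - intro s. split; [|exact Ht].
    pose proof (sin2_cos2 s) as E. unfold Rsqr in E.
    unfold on_S3, rot_curve. destruct k as [|[|[|[|k]]]]; try lia; simpl; nra.
  - intros m Hm. unfold rot_curve, q0. rewrite sin_0, cos_0.
    destruct k as [|[|[|[|k]]]]; try lia; destruct m as [|[|[|[|[|m]]]]]; try lia; reflexivity.
  - intros m Hm. apply is_derive_Reals.
    unfold rot_curve, rot_vec. destruct k as [|[|[|[|k]]]]; try lia;
    destruct m as [|[|[|[|[|m]]]]]; try lia; simpl; auto_derive; auto;
    rewrite ?sin_0, ?cos_0; ring.
  - apply derivable_pt_lim_const.
Qed.

Lemma path_tangent_vec t : oint lo hi t ->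
  exists tau, 0 < tau /\ tangent_vec (oint lo hi) F q0 t (tvec t tau q0 (fun _ => 0)).
Proof.
  intros Ht.
  destruct (oint_open lo hi t Ht) as [d [Hd Hu]].
  exists (d / 2). split; [lra|].
  apply (tangent_vec_of_curve (fun _ => q0) (fun s => t + d / 2 * sin s)).
  - intro s. split; [exact q0_S3|]. apply Hu.
    replace (t + d / 2 * sin s - t) with (d / 2 * sin s) by ring.
    rewrite Rabs_mult, (Rabs_right (d / 2)) by lra.
    pose proof (SIN_bound s). assert (Rabs (sin s) <= 1) by (apply Rabs_le; lra). nra.
  - reflexivity.
  - rewrite sin_0. ring.
  - intros. apply derivable_pt_lim_const.
  - apply is_derive_Reals. auto_derive; auto. rewrite cos_0. ring.
Qed.

Lemma residuals_of_phi_vanishes :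
  (forall (q : vec) (t : R), on_S3 q -> oint lo hi t ->
     forall w1 w2 w3 : pt,
       tangent_vec (oint lo hi) F q t w1 ->
       tangent_vec (oint lo hi) F q t w2 ->
       tangent_vec (oint lo hi) F q t w3 ->
       phi lam (F q t) w1 w2 w3 = 0) ->
  (forall t, oint lo hi t -> forall i, (1 <= i <= 3)%nat ->
     residual lam (coef3 a1 a2 a3 t) (coef3 da1 da2 da3 t) (x1 t) (x5 t) (dx5 t / x1 t) i = 0).
Proof.
  intros Hphi t Ht.
  destruct (path_tangent_vec t Ht) as [tau [Htau HP]].
  assert (H0 : forall j k, (1 <= j <= 3)%nat -> (1 <= k <= 3)%nat ->
    phi lam (orbit_pt (x1 t) (x5 t) q0, coef3 a1 a2 a3 t)
      (tvec t 0 q0 (rot_vec j)) (tvec t 0 q0 (rot_vec k)) (tvec t tau q0 (fun _ => 0)) = 0).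
  { intros j k Hj Hk. rewrite <- phi_Fmap by (apply hpos || apply hcirc || apply q0_S3; exact Ht).
    apply Hphi; auto using q0_S3, rot_tangent_vec. }
  destruct (phi_rot_path lam (x1 t) (x5 t) (dx5 t) (coef3 a1 a2 a3 t) (coef3 da1 da2 da3 t) tau
              hlam (hpos t Ht) (hcirc t Ht)) as [E12 [E13 E23]].
  set (S := / s_lam lam (orbit_pt (x1 t) (x5 t) q0, coef3 a1 a2 a3 t) ^ 3 * tau) in *.
  set (K := residual lam (coef3 a1 a2 a3 t) (coef3 da1 da2 da3 t) (x1 t) (x5 t) (dx5 t / x1 t)) in *.
  assert (HS : S <> 0).
  { destruct (s_lam_spec lam (orbit_pt (x1 t) (x5 t) q0, coef3 a1 a2 a3 t) hlam) as [Hs _].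
    apply Rmult_integral_contrapositive_currified; [|lra].
    apply Rinv_neq_0_compat, pow_nonzero. lra. }
  assert (Z1 : S * K 1%nat = 0) by exact (eq_trans (eq_sym E12) (H0 1%nat 2%nat ltac:(lia) ltac:(lia))).
  assert (Z2 : S * K 2%nat = 0) by exact (eq_trans (eq_sym E13) (H0 1%nat 3%nat ltac:(lia) ltac:(lia))).
  assert (Z3 : - (S * K 3%nat) = 0) by exact (eq_trans (eq_sym E23) (H0 2%nat 3%nat ltac:(lia) ltac:(lia))).
  intros i Hi.
  destruct i as [|[|[|[|i]]]]; try lia;
    [destruct (Rmult_integral _ _ Z1) | destruct (Rmult_integral _ _ Z2)
    | destruct (Rmult_integral S (K 3%nat)); [lra|..]];
    easy.
Qed.

Lemma phi_vanishes_of_residuals :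
  (forall t, oint lo hi t -> forall i, (1 <= i <= 3)%nat ->
     residual lam (coef3 a1 a2 a3 t) (coef3 da1 da2 da3 t) (x1 t) (x5 t) (dx5 t / x1 t) i = 0) ->
  (forall (q : vec) (t : R), on_S3 q -> oint lo hi t ->
     forall w1 w2 w3 : pt,
       tangent_vec (oint lo hi) F q t w1 ->
       tangent_vec (oint lo hi) F q t w2 ->
       tangent_vec (oint lo hi) F q t w3 ->
       phi lam (F q t) w1 w2 w3 = 0).
Proof.
  intros Hres q t Hq Ht w1 w2 w3 T1 T2 T3.
  destruct (orbit_tangent_of_tangent_vec q t w1 Ht T1) as [g1 [t1 V1]].
  destruct (orbit_tangent_of_tangent_vec q t w2 Ht T2) as [g2 [t2 V2]].
  destruct (orbit_tangent_of_tangent_vec q t w3 Ht T3) as [g3 [t3 V3]].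
  unfold F. rewrite phi_Fmap by auto.
  rewrite (phi_orbit _ _ _ _ (hpos t Ht) (hcirc t Ht) Hq lam _ _ _ _ _ _ _ _ _ _ _ hlam V1 V2 V3).
  rewrite !Hres by (auto; lia). ring.
Qed.

Lemma ode_iff_residuals t : oint lo hi t ->
  (forall a : R -> R, (a = a1 \/ a = a2 \/ a = a3) ->
     4 * deriv a t * ((1 - x5 t) / (1 + x5 t))
     - a t * deriv (fun u => ln (lam + (a1 u ^ 2 + a2 u ^ 2 + a3 u ^ 2))
                             + 8 * ln (1 + x5 u)) t = 0)
  <->
  (forall i, (1 <= i <= 3)%nat ->
     residual lam (coef3 a1 a2 a3 t) (coef3 da1 da2 da3 t) (x1 t) (x5 t) (dx5 t / x1 t) i = 0).
Proof.
  intros Ht.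
  pose proof (hpos t Ht) as H1. pose proof (hcirc t Ht) as H2.
  assert (H5 : 0 < 1 + x5 t) by nra.
  rewrite (deriv_eq_of_lim _ _ _ (log_potential_deriv lam x5 a1 a2 a3 t _ _ _ _ hlam H5
                                   (Dx5 t Ht) (Da1 t Ht) (Da2 t Ht) (Da3 t Ht))).
  pose proof (fun i => residual_zero_iff lam (coef3 a1 a2 a3 t) (coef3 da1 da2 da3 t)
                         (x1 t) (x5 t) (dx5 t) i hlam H1 H2) as Eq.
  split.
  - intros H i Hi. apply Eq.
    destruct i as [|[|[|[|i]]]]; try lia;
    [ specialize (H a1 (or_introl eq_refl)); rewrite (deriv_eq_of_lim _ _ _ (Da1 t Ht)) in H
    | specialize (H a2 (or_intror (or_introl eq_refl))); rewrite (deriv_eq_of_lim _ _ _ (Da2 t Ht)) in H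
    | specialize (H a3 (or_intror (or_intror eq_refl))); rewrite (deriv_eq_of_lim _ _ _ (Da3 t Ht)) in H ];
    exact H.
  - intros H a [-> | [-> | ->]];
    [ rewrite (deriv_eq_of_lim _ _ _ (Da1 t Ht)); exact (proj1 (Eq 1%nat) (H 1%nat ltac:(lia)))
    | rewrite (deriv_eq_of_lim _ _ _ (Da2 t Ht)); exact (proj1 (Eq 2%nat) (H 2%nat ltac:(lia)))
    | rewrite (deriv_eq_of_lim _ _ _ (Da3 t Ht)); exact (proj1 (Eq 3%nat) (H 3%nat ltac:(lia))) ].
Qed.

End Path.

Theorem mainTheorem4 (lam : R) (hlam : 0 < lam) (lo hi : option R)
  (x1 x5 a1 a2 a3 : R -> R)
  (hsm : smooth_on (oint lo hi) x1 /\ smooth_on (oint lo hi) x5 /\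
         smooth_on (oint lo hi) a1 /\ smooth_on (oint lo hi) a2 /\
         smooth_on (oint lo hi) a3)
  (hpos : forall t, oint lo hi t -> 0 < x1 t)
  (hcirc : forall t, oint lo hi t -> x1 t ^ 2 + x5 t ^ 2 = 1) :
  (forall (q : vec) (t : R), on_S3 q -> oint lo hi t ->
     forall w1 w2 w3 : pt,
       tangent_vec (oint lo hi) (Fmap x1 x5 a1 a2 a3) q t w1 ->
       tangent_vec (oint lo hi) (Fmap x1 x5 a1 a2 a3) q t w2 ->
       tangent_vec (oint lo hi) (Fmap x1 x5 a1 a2 a3) q t w3 ->
       phi lam (Fmap x1 x5 a1 a2 a3 q t) w1 w2 w3 = 0)
  <->
  (forall t, oint lo hi t ->
     forall a : R -> R, (a = a1 \/ a = a2 \/ a = a3) ->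
       4 * deriv a t * ((1 - x5 t) / (1 + x5 t))
       - a t * deriv (fun u => ln (lam + (a1 u ^ 2 + a2 u ^ 2 + a3 u ^ 2))
                               + 8 * ln (1 + x5 u)) t = 0).
Proof.
  destruct hsm as [S1 [S5 [Sa1 [Sa2 Sa3]]]].
  destruct (smooth_on_derivable _ _ S1) as [dx1 Dx1], (smooth_on_derivable _ _ S5) as [dx5 Dx5],
           (smooth_on_derivable _ _ Sa1) as [da1 Da1], (smooth_on_derivable _ _ Sa2) as [da2 Da2],
           (smooth_on_derivable _ _ Sa3) as [da3 Da3].
  pose proof (ode_iff_residuals lam lo hi x1 x5 a1 a2 a3 dx5 da1 da2 da3
                hlam Dx5 Da1 Da2 Da3 hpos hcirc) as Hode.
  split.
  - intros Hphi t Ht. apply (Hode t Ht).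
    exact (residuals_of_phi_vanishes lam lo hi x1 x5 a1 a2 a3 dx1 dx5 da1 da2 da3
             hlam Dx1 Dx5 Da1 Da2 Da3 hpos hcirc Hphi t Ht).
  - intros H. apply (phi_vanishes_of_residuals lam lo hi x1 x5 a1 a2 a3 dx1 dx5 da1 da2 da3
                       hlam Dx1 Dx5 Da1 Da2 Da3 hpos hcirc).
    intros t Ht. apply (Hode t Ht), H, Ht.
Qed.
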